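(* Let $\mathfrak{A}=\{\mathscr{M}^{KI},\mathscr{M}^{KK},\mathscr{A}^{KI},\mathscr{A}^{KK},\mathscr{H}^{KI},\mathscr{H}^{KK}\}$. Then the graph parameters $p_{\mathfrak{A}}$ and $\widetilde{\omega}$ are equivalent, i.e. there exist functions $f,g\colon\mathbb{N}\to\mathbb{N}$ such that $p_{\mathfrak{A}}(G)\le f(\widetilde{\omega}(G))$ and $\widetilde{\omega}(G)\le g(p_{\mathfrak{A}}(G))$ for every finite graph $G$.
   Context: Two vertices are equivalent if they lie in exactly the same maximal cliques; $\widetilde{\omega}(G)$ is the maximum over maximal cliques $K$ of $G$ of the number of equivalence classes meeting $K$. For each $n\ge1$ let $X=\{x_1,\dots,x_n\}$, $Y=\{y_1,\dots,y_n\}$ be disjoint ordered sets. The matching has edges $x_iy_i$; the anti-matching has edges $x_iy_j$ for $i\neq j$; the half-graph has edges $x_iy_j$ for $i\le j$. $\mathscr{M}^{KI}_n$ (resp. $\mathscr{A}^{KI}_n$, $\mathscr{H}^{KI}_n$) is the graph on $X\cup Y$ consisting of the matching (resp. anti-matching, half-graph) between $X$ and $Y$ together with all edges within $X$ (so $X$ is a clique and $Y$ independent); $\mathscr{M}^{KK}_n$, $\mathscr{A}^{KK}_n$, $\mathscr{H}^{KK}_n$ are obtained by additionally making $Y$ a clique. For a family $\mathfrak{F}$ of sequences $\langle\mathscr{X}_n\rangle_n$, $p_{\mathfrak{F}}(G)$ is the maximum $n$ such that some $\mathscr{X}\in\mathfrak{F}$ has $\mathscr{X}_n$ as an induced subgraph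 of $G$. *)

(* finite simple graphs as symmetric irreflexive relations
   on a finType. *)
From mathcomp Require Import all_boot.
Set Implicit Arguments. Unset Strict Implicit. Unset Printing Implicit Defensive.

Section GraphDefs.
Variables (T : finType) (e : rel T).

Definition is_clique (A : {set T}) : bool :=
  [forall x in A, forall y in A, (x != y) ==> e x y].

Definition is_maxclique (A : {set T}) : bool :=
  is_clique A && [forall B : {set T}, (is_clique B && (A \subset B)) ==> (B == A)].

Definition vequiv (x y : T) : bool :=
  [forall K : {set T}, is_maxclique K ==> ((x \in K) == (y \in K))].

Definition vclass (x : T) : {set T} := [set y | vequiv x y].

Definition nclasses (K : {set T}) : nat := #|[set vclass x | x in K]|.

Definition omega_tilde : nat := \max_(K : {set T} | is_maxclique K) nclasses K.

Definition induced_sub (V : finType) (h : rel V) : bool :=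
  [exists f : {ffun V -> T},
     injectiveb f && [forall u, forall v, e (f u) (f v) == h u v]].

End GraphDefs.

Inductive bip := Match | Anti | Half.

Definition bip_edge (t : bip) (n : nat) (i j : 'I_n) : bool :=
  match t with
  | Match => i == j
  | Anti => i != j
  | Half => (i <= j)%N
  end.

(* Vertex set X u Y encoded as 'I_n + 'I_n: inl i = x_{i+1}, inr j = y_{j+1}.
   X is always a clique; Y is a clique iff kk (KK-variant), else independent. *)
Definition model_rel (t : bip) (kk : bool) (n : nat) : rel ('I_n + 'I_n) :=
  fun u v =>
    match u, v with
    | inl i, inl j => i != j
    | inr i, inr j => kk && (i != j)
    | inl i, inr j => bip_edge t i j
    | inr i, inl j => bip_edge t j i
    end.
Arguments model_rel : clear implicits.

Definition has_A_model (T : finType) (e : rel T) (n : nat) : bool :=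
  has (fun t => has (fun kk => induced_sub e (model_rel t kk n)) [:: false; true])
      [:: Match; Anti; Half].

(* p_A(G): the maximum n >= 1 with such an induced subgraph (0 if none).
   Any such n satisfies 2n <= |V(G)|, so restricting to n <= |V(G)| loses
   nothing. *)
Definition p_A (T : finType) (e : rel T) : nat :=
  \max_(n < #|T|.+1 | (0 < n)%N && has_A_model e n) n.

(* If G contains one of the n-th graphs of the family, its X-side is a clique
   whose vertices are pairwise told apart by Y-vertices adjacent to exactly one
   of them; hence they lie in distinct classes of any maximal clique containing
   X, and p_A <= omega_tilde.
   Conversely, two non-equivalent vertices of a maximal clique K are told apart
   by a vertex outside K. Repeatedly splitting K along such separators yields,
   from 2^k classes, a ladder a_0, ..., a_(k-1) in K and b_0, ..., b_(k-1)
   outside K such that b_i is adjacent to every later a_j iff c_i, and to a_i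
   iff not c_i. Pigeonhole on c and Ramsey's theorem, applied to the pairs
   (b_j, a_i) and (b_i, b_j) with i < j, leave a subladder on which adjacency
   depends only on the order of the indices. The a's form a clique, the b's a
   clique or an independent set, and the pattern between them is a matching,
   an anti-matching or a half-graph. *)

From mathcomp Require Import all_boot zify.
Set Implicit Arguments. Unset Strict Implicit. Unset Printing Implicit Defensive.

Definition homogeneous (c : nat -> nat -> bool) (b : bool) (t : seq nat) :=
  {in t &, forall i j, i < j -> c i j = b}.

Lemma homogeneous_cons_filter c b x s t :
    sorted ltn (x :: s) -> subseq t [seq y <- s | c x y == b] ->
    homogeneous c b t -> subseq (x :: t) (x :: s) /\ homogeneous c b (x :: t).
Proof.
move=> xs_sorted sub_t hom_t; have sub_ts := subseq_trans sub_t (filter_subseq _ s).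
split; first by rewrite /= eqxx.
have x_lt := order_path_min ltn_trans xs_sorted.
move=> i j; rewrite !inE => /predU1P[->|it] /predU1P[->|jt] lt_ij.
- by rewrite ltnn in lt_ij.
- by have := mem_subseq sub_t jt; rewrite mem_filter => /andP[/eqP].
- by have := allP x_lt i (mem_subseq sub_ts it); rewrite ltnNge ltnW.
- exact: hom_t.
Qed.

Lemma ramsey_subseq c k l s : sorted ltn s -> 2 ^ (k + l) <= size s ->
  exists2 t, subseq t s &
    (size t = k /\ homogeneous c false t) \/ (size t = l /\ homogeneous c true t).
Proof.
have hom_nil b : homogeneous c b [::] by move=> i j; rewrite in_nil.
elim: k l s => [|k IHk] l s s_sorted size_s; first by exists [::]; [exact: sub0seq | left].
elim: l s s_sorted size_s => [|l IHl] s s_sorted size_s.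
  by exists [::]; [exact: sub0seq | right].
case: s s_sorted size_s => [|x s] s_sorted size_s; first by rewrite leqNgt expn_gt0 in size_s.
pose sb b := [seq y <- s | c x y == b].
have sorted_sb b : sorted ltn (sb b) := sorted_filter ltn_trans _ (path_sorted s_sorted).
have sub_sb b t : subseq t (sb b) -> subseq t (x :: s).
  by move/subseq_trans; apply; apply: subseq_trans (filter_subseq _ _) (subseq_cons _ _).
have [big_false|big_true] : 2 ^ (k + l.+1) <= size (sb false) \/
                            2 ^ (k.+1 + l) <= size (sb true).
  have := count_predC (c x) s; rewrite !size_filter.
  rewrite (@eq_count _ (fun y => c x y == true) (c x)); last by move=> y; rewrite eqb_id.
  rewrite (@eq_count _ (fun y => c x y == false) (predC (c x)));
    last by move=> y; rewrite eqbF_neg.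
  have Epow : 2 ^ (k.+1 + l.+1) = 2 ^ (k + l.+1) + 2 ^ (k.+1 + l).
    by rewrite addSn expnS addnS mul2n -addnn.
  by move: size_s; rewrite /= Epow; lia.
- have [t sub_t [[sz_t hom_t]|[sz_t hom_t]]] := IHk _ _ (sorted_sb false) big_false.
    have [] := homogeneous_cons_filter s_sorted sub_t hom_t.
    by exists (x :: t) => //; left; rewrite /= sz_t.
  by exists t; [exact: sub_sb sub_t | right].
- have [t sub_t [[sz_t hom_t]|[sz_t hom_t]]] := IHl _ (sorted_sb true) big_true.
    by exists t; [exact: sub_sb sub_t | left].
  have [] := homogeneous_cons_filter s_sorted sub_t hom_t.
  by exists (x :: t) => //; right; rewrite /= sz_t.
Qed.

Definition ramsey_number n := 2 ^ (n + n).

Lemma ramsey_subseq_diag c n s : sorted ltn s -> ramsey_number n <= size s ->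
  exists b, exists2 t, subseq t s & size t = n /\ homogeneous c b t.
Proof.
move=> s_sorted /(ramsey_subseq c s_sorted) [t sub_t [] [sz_t hom_t]];
  [by exists false, t | by exists true, t].
Qed.

(* The adjacency of b_j and a_i in a ladder all of whose colours are c and all of
   whose pairs (b_j, a_i), i < j, are adjacent iff d. *)
Definition stair (c d : bool) (i j : nat) : bool :=
  if i < j then d else if j < i then c else ~~ c.

(* When [c && ~~ d] the pattern is the strict staircase [j < i]: reversing both
   orders and shifting the second one by one turns it into the half-graph, which
   is why [n.+1] indices are used. *)
Lemma stair_embedding c d n : exists t, exists s r : 'I_n -> nat,
  [/\ injective s, injective r, forall u, s u <= n /\ r u <= n &
      forall u v, stair c d (s u) (r v) = bip_edge t u v].
Proof.
case cd: (c && ~~ d).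
  move/andP: cd => [-> /negbTE ->].
  exists Half, (fun u : 'I_n => n - u), (fun v : 'I_n => n - v.+1).
  split=> [u w eq_uw | u w eq_uw | u | u v].
  - by apply: val_inj; move: eq_uw (ltn_ord u) (ltn_ord w) => /=; lia.
  - by apply: val_inj; move: eq_uw (ltn_ord u) (ltn_ord w) => /=; lia.
  - by rewrite !leq_subr.
  - rewrite /stair /bip_edge; move: (ltn_ord u) (ltn_ord v) => lt_u lt_v.
    by case: ltnP => ?; [|case: ltnP => ? /=]; case: leqP => ? //; lia.
have [t st] : exists t, forall u v : 'I_n, stair c d u v = bip_edge t u v.
  move: cd; rewrite /stair; case: c; case: d => // _;
    [exists Anti | exists Half | exists Match];
    by move=> u v; rewrite /= -?val_eqE /=; case: ltngtP.
exists t, val, val; split=> [||u|//]; try exact: val_inj.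
by split; exact: ltnW (ltn_ord u).
Qed.

Lemma bip_edge_sep t n (i j : 'I_n) :
  i != j -> exists v, bip_edge t i v != bip_edge t j v.
Proof.
move=> neq_ij; case: (ltngtP i j) => [lt_ij | lt_ji | /val_inj eq_ij].
- by exists i; case: t => /=; rewrite ?eqxx ?leqnn -?ltnNge //;
    rewrite [j == i]eq_sym (negbTE neq_ij).
- by exists j; case: t => /=; rewrite ?eqxx ?leqnn ?(negbTE neq_ij) // leqNgt lt_ji.
- by rewrite eq_ij eqxx in neq_ij.
Qed.

Lemma induced_subP (T V : finType) (e : rel T) (h : rel V) :
  reflect (exists2 f : V -> T, injective f & forall u v, e (f u) (f v) = h u v)
          (induced_sub e h).
Proof.
apply: (iffP existsP) => [[f /andP [/injectiveP injf /forallP ef]] | [f injf ef]].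
  by exists f => // u v; apply/eqP/(forallP (ef u)).
exists [ffun u => f u]; apply/andP; split.
  by apply/injectiveP => u v; rewrite !ffunE => /injf.
by apply/forallP => u; apply/forallP => v; rewrite !ffunE ef.
Qed.

Lemma has_A_modelP (T : finType) (e : rel T) n :
  reflect (exists t kk, induced_sub e (model_rel t kk n)) (has_A_model e n).
Proof.
rewrite /has_A_model /= !orbF.
apply: (iffP idP) => [|[[] [[]]] ->]; rewrite ?orbT //.
by case/orP => [/orP [] | /orP [/orP [] | /orP []]] h; do 2 eexists; exact: h.
Qed.

Section Ladder.
Variables (T : finType) (e : rel T).

Definition ladder (A B : {set T}) k (a b : nat -> T) (c : nat -> bool) :=
  forall i, i < k -> [/\ a i \in A, b i \in B, e (b i) (a i) = ~~ c i &
                        forall j, i < j < k -> e (b i) (a j) = c i].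

Lemma ladder_cons (A A' B : {set T}) k a b c a0 b0 c0 :
    {subset A' <= A} -> a0 \in A -> b0 \in B -> e b0 a0 = ~~ c0 ->
    {in A', forall z, e b0 z = c0} -> ladder A' B k a b c ->
  ladder A B k.+1 (fun i => if i is i.+1 then a i else a0)
                  (fun i => if i is i.+1 then b i else b0)
                  (fun i => if i is i.+1 then c i else c0).
Proof.
move=> sAA' Aa0 Bb0 e0 eA' lad [_|i lt_i] /=.
  split=> // [[|j] //= lt_j]; have [aj _ _ _] := lad j lt_j; exact: eA'.
have [ai bi eii eij] := lad i lt_i.
by split=> [||| [|j] //= lt_ij]; [exact: sAA' | | | exact: eij].
Qed.

Lemma ladder_of_classes (T' : finType) (cl : T -> T') (B : {set T}) k (A : {set T}) :
    {in A &, forall x y, cl x != cl y -> exists2 w, w \in B & e w x != e w y} ->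
    2 ^ k <= #|cl @: A| -> exists a b c, ladder A B k a b c.
Proof.
elim: k A => [|k IHk] A sepA szA.
  have /card_gt0P [_ /imsetP [x0 _ _]] : 0 < #|cl @: A| by [].
  by exists (fun=> x0), (fun=> x0), (fun=> true).
have /card_gt1P [_ [_ [/imsetP [x Ax ->] /imsetP [y Ay ->] clxy]]] : 1 < #|cl @: A|.
  by apply: leq_trans szA; rewrite expnS leq_pmulr ?expn_gt0.
have [w Bw exy] := sepA x y Ax Ay clxy.
pose Aw cb := [set z in A | e w z == cb].
have [cb szAw] : exists cb, 2 ^ k <= #|cl @: Aw cb|.
  have splitA : A = Aw true :|: Aw false.
    by apply/setP => z; rewrite !inE; case: (e w z); rewrite ?andbT ?andbF ?orbF.
  have := (leq_card_setU (cl @: Aw true) (cl @: Aw false)).1.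
  rewrite -imsetU -splitA; move: szA; rewrite expnS.
  by case: (leqP (2 ^ k) #|cl @: Aw true|) => ?; [exists true | exists false; lia].
have [a0 Aa0 ea0] : exists2 a0, a0 \in A & e w a0 = ~~ cb.
  have [|wx] := eqVneq (e w x) (~~ cb); first by exists x.
  by exists y => //; move: wx exy; case: (e w x); case: (e w y); case: (cb).
have sAw : {subset Aw cb <= A} by move=> z; rewrite inE => /andP[].
have [a [b [c lad]]] := IHk _ (sub_in2 sAw sepA) szAw.
exists (fun i => if i is i.+1 then a i else a0),
       (fun i => if i is i.+1 then b i else w),
       (fun i => if i is i.+1 then c i else cb).
by apply: ladder_cons lad => // z; rewrite inE => /andP[_ /eqP].
Qed.

Lemma ladder_stair_subseq A B n a b c :
    ladder A B (2 * ramsey_number (ramsey_number n)) a b c ->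
  exists c0 d q, exists t, [/\ sorted ltn t, size t = n,
    {in t, forall i, a i \in A /\ b i \in B},
    {in t &, forall i j, e (b j) (a i) = stair c0 d i j} &
    homogeneous (fun i j => e (b i) (b j)) q t].
Proof.
set m := ramsey_number _; move=> lad.
have [c0 szs] : exists c0, m <= size [seq i <- iota 0 (2 * m) | c i == c0].
  have := count_predC c (iota 0 (2 * m)); rewrite size_iota.
  case: (leqP m (count c (iota 0 (2 * m)))) => ?; [exists true | exists false].
  - by rewrite size_filter (@eq_count _ _ c) // => i; rewrite eqb_id.
  - by rewrite size_filter (@eq_count _ _ (predC c)); [lia | move=> i; rewrite eqbF_neg].
set s := filter _ _ in szs.
have s_sorted : sorted ltn s := sorted_filter ltn_trans _ (iota_ltn_sorted 0 _).
have [d [t1 sub_t1 [sz_t1 hom_t1]]] :=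
  ramsey_subseq_diag (fun i j => e (b j) (a i)) s_sorted szs.
have [q [t sub_t [sz_t hom_t]]] := ramsey_subseq_diag (fun i j => e (b i) (b j))
  (subseq_sorted ltn_trans sub_t1 s_sorted) (eq_leq (esym sz_t1)).
have t_s i : i \in t -> i < 2 * m /\ c i = c0.
  move=> /(mem_subseq sub_t) /(mem_subseq sub_t1).
  by rewrite mem_filter mem_iota => /andP [/eqP -> /andP [_ ->]].
exists c0, d, q, t; split => //.
- exact: (subseq_sorted ltn_trans (subseq_trans sub_t sub_t1) s_sorted).
- by move=> i /t_s [/lad []].
- move=> i j it jt; have [lt_i _] := t_s i it; have [lt_j cj] := t_s j jt.
  have [_ _ ejj eji] := lad j lt_j.
  rewrite /stair; case: ltngtP => [lt_ij | lt_ji | ->].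
  + exact: hom_t1 (mem_subseq sub_t it) (mem_subseq sub_t jt) lt_ij.
  + by rewrite eji ?cj ?lt_ji.
  + by rewrite ejj cj.
Qed.

Lemma stair_injective n (a b : nat -> T) c d :
    (forall i j, i <= n -> j <= n -> e (b j) (a i) = stair c d i j) ->
  {in [pred i | i <= n] &, injective a} /\ {in [pred i | i <= n] &, injective b}.
Proof.
move=> ba; suff sep i j : i < j <= n -> a i != a j /\ b i != b j.
  have inj_of_neq (f : nat -> T) : (forall i j, i < j <= n -> f i != f j) ->
      {in [pred i | i <= n] &, injective f}.
    move=> neq_f i j le_i le_j eq_f; case: (ltngtP i j) => // [lt_ij | lt_ji].
    - by move: (neq_f i j); rewrite lt_ij (le_j : j <= n) eq_f eqxx => /(_ isT).
    - by move: (neq_f j i); rewrite lt_ji (le_i : i <= n) eq_f eqxx => /(_ isT).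
  by split; apply: inj_of_neq => i j /sep [].
case/andP => lt_ij le_j; have le_i := ltnW (leq_trans lt_ij le_j).
have bi_aj : e (b i) (a j) = c by rewrite ba // /stair ltnNge (ltnW lt_ij) lt_ij.
have bi_ai : e (b i) (a i) = ~~ c by rewrite ba // /stair ltnn.
have bj_aj : e (b j) (a j) = ~~ c by rewrite ba // /stair ltnn.
by split; apply/eqP => eq_ij; move: bi_aj; rewrite ?eq_ij ?bj_aj -?eq_ij ?bi_ai; case: (c).
Qed.

End Ladder.

Section Graph.
Variables (T : finType) (e : rel T).
Hypotheses (e_sym : symmetric e) (e_irr : irreflexive e).

Lemma is_cliqueP (A : {set T}) :
  reflect {in A &, forall x y, x != y -> e x y} (is_clique e A).
Proof.
apply: (iffP forall_inP) => [cA x y xA yA | cA x xA].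
  exact/implyP/(forall_inP (cA x xA) y yA).
by apply/forall_inP => y yA; apply/implyP/cA.
Qed.

Lemma maxclique_clique K : is_maxclique e K -> is_clique e K.
Proof. by case/andP. Qed.

Lemma clique_sub_maxclique A : is_clique e A -> exists2 K, is_maxclique e K & A \subset K.
Proof.
move=> cA; case: (@arg_maxnP _ A [pred B | is_clique e B && (A \subset B)] (fun B => #|B|)).
  by rewrite /= cA subxx.
move=> K /andP [cK sAK] maxK; exists K => //; apply/andP; split => //.
apply/forallP => B; apply/implyP => /andP [cB sKB].
by rewrite eq_sym eqEcard sKB; apply: maxK; rewrite /= cB (subset_trans sAK sKB).
Qed.

Lemma maxclique_nonadj L y : is_maxclique e L -> y \notin L ->
  exists2 z, z \in L & ~~ e z y.
Proof.
case/andP => cL /forallP /(_ (y |: L)) maxL yL.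
have ncyL : ~~ is_clique e (y |: L).
  apply: contra yL => cyL; move: maxL; rewrite cyL subsetUr => /eqP <-.
  exact: setU11.
apply/exists_inP; apply: contraR ncyL => /exists_inPn nyL; apply/is_cliqueP => u v.
rewrite !in_setU1 => /predU1P [-> | uL] /predU1P [-> | vL] neq_uv.
- by rewrite eqxx in neq_uv.
- by rewrite e_sym; apply: negbNE; exact: nyL.
- by apply: negbNE; exact: nyL.
- by move/is_cliqueP: cL; apply.
Qed.

Lemma vequivP x y :
  reflect (forall K, is_maxclique e K -> (x \in K) = (y \in K)) (vequiv e x y).
Proof.
apply: (iffP forallP) => [exy K mK | exy K]; last by apply/implyP => /exy ->.
exact/eqP/(implyP (exy K) mK).
Qed.

Lemma eq_vclass x y : (vclass e x == vclass e y) = vequiv e x y.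
Proof.
apply/eqP/idP => [/setP/(_ y) | /vequivP exy].
  by rewrite !inE => ->; apply/vequivP.
apply/setP => z; rewrite !inE.
by apply/vequivP/vequivP => ezw K mK; rewrite -ezw // exy.
Qed.

Lemma separator_not_vequiv w x y :
  w != x -> w != y -> e w x != e w y -> ~~ vequiv e x y.
Proof.
wlog ewx : x y / e w x => [base neq_wx neq_wy exy | neq_wx neq_wy].
  case ewx: (e w x); first exact: base.
  rewrite -eq_vclass eq_sym eq_vclass; apply: base => //; last by rewrite eq_sym.
  by move: exy; rewrite ewx; case: (e w y).
rewrite ewx eq_sym eqb_id => /negPf newy.
have [K mK sK] : exists2 K, is_maxclique e K & [set w; x] \subset K.
  apply: clique_sub_maxclique; apply/is_cliqueP => u v.
  rewrite !inE => /orP [] /eqP -> /orP [] /eqP -> //; rewrite ?eqxx // => _.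
  by rewrite e_sym.
have wK : w \in K by apply: (subsetP sK); rewrite !inE eqxx.
have xK : x \in K by apply: (subsetP sK); rewrite !inE eqxx orbT.
apply/vequivP => /(_ K mK); rewrite xK => /esym yK.
by move/is_cliqueP: (maxclique_clique mK) => /(_ w y wK yK neq_wy); rewrite newy.
Qed.

Lemma maxclique_separator K x y : is_maxclique e K -> x \in K -> y \in K ->
  ~~ vequiv e x y -> exists2 w, w \notin K & e w x != e w y.
Proof.
move=> mK xK yK /forallPn [L]; rewrite negb_imply => /andP [mL].
wlog xL : x y xK yK / x \in L => [base xyL | ].
  case xL: (x \in L); first exact: base.
  have yL : y \in L by move: xyL; rewrite xL; case: (y \in L).
  have [|w nwK ewyx] := base y x yK xK yL; first by rewrite xL yL.
  by exists w; rewrite // eq_sym.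
rewrite xL; case yL: (y \in L) => // _.
have [z zL nezy] := maxclique_nonadj mL (negbT yL).
have /is_cliqueP cK := maxclique_clique mK.
have /is_cliqueP cL := maxclique_clique mL.
have neq_zy : z != y by apply: contraTneq zL => ->; rewrite yL.
have neq_zx : z != x.
  by apply: contraNneq nezy => ->; apply: cK => //; apply: contraTneq xL => ->; rewrite yL.
exists z; first by apply: contra nezy => zK; exact: cK.
by rewrite cL // (negbTE nezy).
Qed.

Lemma clique_le_omega_tilde A : is_clique e A ->
  {in A &, forall x y, vequiv e x y -> x = y} -> #|A| <= omega_tilde e.
Proof.
move=> cA injA; have [K mK sAK] := clique_sub_maxclique cA.
apply: leq_trans (leq_bigmax_cond _ mK); rewrite /nclasses.
rewrite -(card_in_imset (f := vclass e)); first exact/subset_leq_card/imsetS.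
by move=> x y xA yA /eqP; rewrite eq_vclass; exact: injA.
Qed.

Lemma has_A_model_le_omega_tilde n : has_A_model e n -> n <= omega_tilde e.
Proof.
case/has_A_modelP => t [kk /induced_subP [f inj_f ef]].
have inj_X : injective (f \o inl) by move=> i j /inj_f [].
rewrite -[n]card_ord -cardsT -(card_imset _ inj_X).
apply: clique_le_omega_tilde => [|_ _ /imsetP [i _ ->] /imsetP [j _ ->]].
  apply/is_cliqueP => _ _ /imsetP [i _ ->] /imsetP [j _ ->] neq_ij.
  by rewrite /= ef /=; apply: contraNneq neq_ij => ->.
apply: contraTeq => neq_fij; have neq_ij : i != j by apply: contraNneq neq_fij => ->.
have [v sep_v] := bip_edge_sep t neq_ij.
by apply: (separator_not_vequiv (w := f (inr v))); rewrite ?(inj_eq inj_f) // !ef.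
Qed.

Lemma has_A_model_le_p_A n : 0 < n -> has_A_model e n -> n <= p_A e.
Proof.
move=> n_gt0 hn; have lt_n : n < #|T|.+1.
  case/has_A_modelP: hn => t [kk /induced_subP [f inj_f _]].
  by have := leq_card f inj_f; rewrite card_sum card_ord; lia.
by apply: (@leq_bigmax_cond _ _ _ (Ordinal lt_n)); rewrite /= n_gt0.
Qed.

Lemma p_A_le_omega_tilde : p_A e <= omega_tilde e.
Proof. by apply/bigmax_leqP => i /andP [_]; exact: has_A_model_le_omega_tilde. Qed.

Lemma stair_model n (K : {set T}) (a b : nat -> T) c d q :
    0 < n -> is_clique e K ->
    (forall i, i <= n -> a i \in K /\ b i \notin K) ->
    (forall i j, i <= n -> j <= n -> e (b j) (a i) = stair c d i j) ->
    (forall i j, i < j <= n -> e (b i) (b j) = q) ->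
  n <= p_A e.
Proof.
move=> n_gt0 /is_cliqueP cK abK ba bb.
have [inj_a inj_b] := stair_injective ba.
have [t [s [r [inj_s inj_r sr_le st]]]] := stair_embedding c d n.
have as_K i : a (s i) \in K by case: (abK _ (sr_le i).1).
have br_K i : b (r i) \notin K by case: (abK _ (sr_le i).2).
apply: (has_A_model_le_p_A n_gt0); apply/has_A_modelP; exists t, q.
apply/induced_subP; exists (fun u => match u with inl i => a (s i) | inr j => b (r j) end).
  move=> [i|i] [j|j] /= eq_ij.
  - by move: eq_ij => /(inj_a _ _ (sr_le i).1 (sr_le j).1) /inj_s ->.
  - by move: (as_K i) (br_K j); rewrite eq_ij => ->.
  - by move: (as_K j) (br_K i); rewrite eq_ij => ->.
  - by move: eq_ij => /(inj_b _ _ (sr_le i).2 (sr_le j).2) /inj_r ->.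
move=> [i|i] [j|j] /=.
- have [->|neq_ij] := eqVneq i j; first exact: e_irr.
  apply: cK; rewrite ?as_K //; apply: contra_neq neq_ij.
  by move=> /(inj_a _ _ (sr_le i).1 (sr_le j).1) /inj_s.
- by rewrite e_sym ba ?st ?(sr_le i).1 ?(sr_le j).2.
- by rewrite ba ?st ?(sr_le i).2 ?(sr_le j).1.
- have [->|neq_ij] := eqVneq i j; first by rewrite e_irr andbF.
  have neq_r : r i != r j by rewrite (inj_eq inj_r).
  rewrite andbT; case: (ltngtP (r i) (r j)) => [lt_ij | lt_ji | eq_r].
  + by rewrite bb // lt_ij (sr_le j).2.
  + by rewrite e_sym bb // lt_ji (sr_le i).2.
  + by rewrite eq_r eqxx in neq_r.
Qed.

Lemma omega_tilde_attained : exists2 K, is_maxclique e K & omega_tilde e = nclasses e K.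
Proof.
have [K0 mK0 _] : exists2 K0, is_maxclique e K0 & set0 \subset K0.
  by apply: clique_sub_maxclique; apply/is_cliqueP => x y; rewrite inE.
exists [arg max_(K > K0 | is_maxclique e K) nclasses e K]; first by case: arg_maxnP.
exact: bigmax_eq_arg.
Qed.

(* One halving for the pigeonhole on the colours of the ladder, then Ramsey for
   the pairs (b_j, a_i) and for the pairs (b_i, b_j). *)
Definition omega_threshold n := 2 ^ (2 * ramsey_number (ramsey_number n.+1)).

Lemma omega_tilde_large n : 0 < n -> omega_threshold n <= omega_tilde e -> n <= p_A e.
Proof.
move=> n_gt0; have [K mK ->] := omega_tilde_attained => large.
have sepK : {in K &, forall x y, vclass e x != vclass e y ->
    exists2 w, w \in ~: K & e w x != e w y}.
  move=> x y xK yK; rewrite eq_vclass => /(maxclique_separator mK xK yK) [w wK sep].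
  by exists w; rewrite ?inE.
have [a [b [c lad]]] := ladder_of_classes sepK large.
have [c0 [d [q [t [t_sorted sz_t tAB t_stair t_hom]]]]] := ladder_stair_subseq lad.
have lt_nth := leqW_mono_in (leq_mono_in (sorted_ltn_nth ltn_trans 0 t_sorted)).
have t_nth i : i <= n -> nth 0 t i \in t by move=> le_i; rewrite mem_nth ?sz_t.
apply: (@stair_model n K (a \o nth 0 t) (b \o nth 0 t) c0 d q n_gt0 (maxclique_clique mK)).
- by move=> i /t_nth /tAB [] /= ->; rewrite inE.
- by move=> i j le_i le_j; rewrite /= t_stair ?t_nth // /stair !lt_nth // inE sz_t.
- move=> i j /andP [lt_ij le_j]; have le_i := ltnW (leq_trans lt_ij le_j).
  by apply: t_hom; rewrite ?t_nth ?lt_nth // inE sz_t.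
Qed.

End Graph.

Theorem theorem7p5 :
  exists f g : nat -> nat,
    forall (T : finType) (e : rel T),
      symmetric e -> irreflexive e ->
      (p_A e <= f (omega_tilde e))%N /\ (omega_tilde e <= g (p_A e))%N.
Proof.
exists id, (fun p => omega_threshold p.+1) => T e e_sym e_irr.
split; first exact: p_A_le_omega_tilde.
rewrite leqNgt; apply/negP => /ltnW /(omega_tilde_large e_sym e_irr (ltn0Sn _)).
by rewrite ltnn.
Qed.
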